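(* Let $(X,\langle\cdot,\cdot\rangle)$ be a real inner product space, $n\ge 2$, and $x,y,x_2,\ldots,x_n\in X$. Then $(x,y\mid x_n,\ldots,x_2)_*=E_n\cdot\langle x,y\mid x_n,\ldots,x_2\rangle$, where $E_2=1$ and, for $n\ge3$, $E_n=\prod_{k=2}^{n-1}\langle x_k,x_k\mid x_{k-1},\ldots,x_2\rangle^{2^{n-k-1}}$.
   Context: The $n$-iterated $2$-inner product is defined recursively: for $n=2$, $(x,y\mid z)_*:=\langle x,y\rangle\langle z,z\rangle-\langle x,z\rangle\langle z,y\rangle$; for $n\ge3$, $(x,y\mid x_n,\ldots,x_2)_*:=(x,y\mid x_{n-1},\ldots,x_2)_*\,(x_n,x_n\mid x_{n-1},\ldots,x_2)_*-(x,x_n\mid x_{n-1},\ldots,x_2)_*\,(x_n,y\mid x_{n-1},\ldots,x_2)_*$. The standard $m$-inner product ($m\ge2$) is $\langle v,w\mid v_2,\ldots,v_m\rangle:=\det(\langle a_i,b_j\rangle)_{1\le i,j\le m}$ with $(a_1,\ldots,a_m)=(v,v_2,\ldots,v_m)$ and $(b_1,\ldots,b_m)=(w,v_2,\ldots,v_m)$; in particular $\langle x,y\mid x_n,\ldots,x_2\rangle$ is the determinant of the matrix with rows indexed by $x,x_n,\ldots,x_2$ and columns indexed by $y,x_n,\ldots,x_2$. By convention, for $m=1$ (the factor $k=2$ in $E_n$), $\langle x_2,x_2\mid x_1,\ldots,x_2\rangle$ means $\langle x_2,x_2\rangle$. *)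

(* A real inner product space is a vector space V over the
   reals R (R : realType) with an inner product ip (symmetric, linear in the
   first argument, positive definite); these axioms appear as hypotheses of
   the theorem. *)
From mathcomp Require Import all_boot all_order all_algebra.
From mathcomp Require Import reals.
Set Implicit Arguments. Unset Strict Implicit. Unset Printing Implicit Defensive.
Import Order.TTheory GRing.Theory Num.Theory.
Local Open Scope ring_scope.

Section Defs.
Variables (R : realType) (V : lmodType R) (ip : V -> V -> R).

Definition ip2star (x y z : V) : R := ip x y * ip z z - ip x z * ip z y.

(* iter_star xs m x y = (x, y | x_{m+2}, ..., x_2)_*, where x_k = xs k *)
Fixpoint iter_star (xs : nat -> V) (m : nat) (x y : V) : R :=
  match m with
  | 0 => ip2star x y (xs 2%N)
  | m'.+1 =>
      let z := xs m'.+3 in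
      iter_star xs m' x y * iter_star xs m' z z
      - iter_star xs m' x z * iter_star xs m' z y
  end.

Definition n_iter_star (n : nat) (xs : nat -> V) (x y : V) : R :=
  iter_star xs (n - 2) x y.

Definition std_ip (v w : V) (s : seq V) : R :=
  \det (\matrix_(i < (size s).+1, j < (size s).+1)
          ip (nth v (v :: s) i) (nth w (w :: s) j)).

Definition desc_list (xs : nat -> V) (k : nat) : seq V :=
  [seq xs i | i <- rev (iota 2 (k - 1))].

Definition E_factor (n : nat) (xs : nat -> V) : R :=
  \prod_(2 <= k < n)
     (std_ip (xs k) (xs k) (desc_list xs k.-1)) ^+ (2 ^ (n - k - 1)).

End Defs.

(* The bordered Gram determinants <x, y | s> satisfy Sylvester's identity
     <x, y | s> <z, z | s> - <x, z | s> <z, y | s> = det (Gram s) <x, y | z, s>,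
   and det (Gram (x_k, ..., x_2)) = <x_k, x_k | x_{k-1}, ..., x_2>. Unfolding one
   step of the recursion for (x, y | x_n, ..., x_2)_* therefore squares the factor
   E_{n-1} and multiplies it by <x_{n-1}, x_{n-1} | x_{n-2}, ..., x_2>, giving E_n.
   Sylvester's identity is a Schur complement computation when the core G is
   invertible; in general G + t is invertible for all but finitely many t, and
   the defect of the identity is a polynomial in t. The identity is purely
   algebraic. *)
From mathcomp Require Import all_boot all_order all_algebra.
From mathcomp Require Import reals ring zify.
Set Implicit Arguments. Unset Strict Implicit. Unset Printing Implicit Defensive.
Import Order.TTheory GRing.Theory Num.Theory.
Local Open Scope ring_scope.

Lemma det_mx22 (R : comNzRingType) (M : 'M[R]_2) :
  \det M = M 0 0 * M 1 1 - M 0 1 * M 1 0.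
Proof.
rewrite (expand_det_row M 0) !big_ord_recl big_ord0 /cofactor !det_mx11 !mxE /=.
have -> : lift 0 0 = 1 :> 'I_2 by apply/val_inj.
have -> : lift 1 0 = 0 :> 'I_2 by apply/val_inj.
by rewrite expr0 expr1 mul1r addr0 mulN1r mulrN.
Qed.

Lemma det_block_schur (R : comUnitRingType) m k (A : 'M[R]_m) (B : 'M_(m, k))
    (C : 'M_(k, m)) (G : 'M_k) :
  G \in unitmx -> \det (block_mx A B C G) = \det G * \det (A - B *m invmx G *m C).
Proof.
move=> uG.
have -> : block_mx A B C G = block_mx 1%:M (B *m invmx G) 0 1%:M *m
                             block_mx (A - B *m invmx G *m C) 0 C G.
  rewrite mulmx_block !mul1mx !mul0mx !add0r -[B *m _ *m G]mulmxA mulVmx //.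
  by rewrite mulmx1 subrK.
by rewrite det_mulmx det_ublock det_lblock !det1 !mul1r mulrC.
Qed.

Definition bordered_minor (R : comNzRingType) k (a : 'M[R]_2) (B : 'M[R]_(2, k))
    (C : 'M[R]_(k, 2)) (G : 'M[R]_k) (i j : 'I_2) : R :=
  \det (block_mx (a i j)%:M (row i B) (col j C) G).

Definition sylvester2_defect (R : comNzRingType) k (a : 'M[R]_2) (B : 'M[R]_(2, k))
    (C : 'M[R]_(k, 2)) (G : 'M[R]_k) : R :=
  let mn := bordered_minor a B C G in
  mn 0 0 * mn 1 1 - mn 0 1 * mn 1 0 - \det G * \det (block_mx a B C G).

Lemma sylvester2_defect_map (R S : comNzRingType) (f : {rmorphism R -> S}) k
    (a : 'M[R]_2) (B : 'M[R]_(2, k)) (C : 'M[R]_(k, 2)) (G : 'M[R]_k) :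
  f (sylvester2_defect a B C G)
  = sylvester2_defect (map_mx f a) (map_mx f B) (map_mx f C) (map_mx f G).
Proof.
rewrite /sylvester2_defect /bordered_minor !rmorphB !rmorphM -!det_map_mx.
by rewrite !map_block_mx !map_scalar_mx !map_row !map_col !mxE.
Qed.

Lemma sylvester2_defect_unit (R : comUnitRingType) k (a : 'M[R]_2)
    (B : 'M[R]_(2, k)) (C : 'M[R]_(k, 2)) (G : 'M[R]_k) :
  G \in unitmx -> sylvester2_defect a B C G = 0.
Proof.
move=> uG; set S := B *m invmx G *m C.
have minorE i j : bordered_minor a B C G i j = \det G * (a i j - S i j).
  rewrite /bordered_minor det_block_schur // det_mx11 !mxE -row_mul mulr1n.
  by congr (_ * (_ - _)); apply: eq_bigr => l _; rewrite !mxE.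
rewrite /sylvester2_defect !minorE det_block_schur // det_mx22 !mxE.
ring.
Qed.

Lemma sylvester2_defect_eq0 (F : numFieldType) k (a : 'M[F]_2)
    (B : 'M[F]_(2, k)) (C : 'M[F]_(k, 2)) (G : 'M[F]_k) :
  sylvester2_defect a B C G = 0.
Proof.
pose Gt := char_poly_mx (- G).
pose P := sylvester2_defect (map_mx polyC a) (map_mx polyC B) (map_mx polyC C) Gt.
have Gt_eval t : map_mx (horner_eval t) Gt = t%:M + G.
  apply/matrixP => i j; rewrite /Gt /char_poly_mx !mxE horner_evalE !hornerE.
  by rewrite hornerMn hornerX opprK.
have P_eval t : P.[t] = sylvester2_defect a B C (t%:M + G).
  have evalC p q (M : 'M[F]_(p, q)) : map_mx (horner_eval t) (map_mx polyC M) = M.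
    by apply/matrixP => i j; rewrite !mxE /= horner_evalE hornerC.
  by rewrite -horner_evalE sylvester2_defect_map Gt_eval !evalC.
have detGt_neq0 : \det Gt != 0 := monic_neq0 (char_poly_monic _).
(* P vanishes wherever det (t + G) does not, so P * det Gt vanishes at 0, 1, 2, ... *)
suff : P * \det Gt = 0.
  move/eqP; rewrite mulf_eq0 (negbTE detGt_neq0) orbF => /eqP P0.
  by have := P_eval 0; rewrite P0 horner0 raddf0 add0r.
pose ts := [seq i%:R : F | i <- iota 0 (size (P * \det Gt))].
apply: (@roots_geq_poly_eq0 _ _ ts); last by rewrite size_map size_iota.
- apply/allP => _ /mapP [i _ ->]; rewrite /root hornerM P_eval.
  have [->|detGt_t] := eqVneq (\det Gt).[i%:R] 0; first by rewrite mulr0.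
  by rewrite sylvester2_defect_unit ?mul0r // unitmxE unitfE -Gt_eval det_map_mx.
- by rewrite map_inj_uniq ?iota_uniq // => i j /eqP; rewrite eqr_nat => /eqP.
Qed.

Lemma det_sylvester2 (F : numFieldType) k (a : 'M[F]_2)
    (B : 'M[F]_(2, k)) (C : 'M[F]_(k, 2)) (G : 'M[F]_k) :
  let mn := bordered_minor a B C G in
  mn 0 0 * mn 1 1 - mn 0 1 * mn 1 0 = \det G * \det (block_mx a B C G).
Proof. by apply/eqP; rewrite -subr_eq0; apply/eqP/sylvester2_defect_eq0. Qed.

Section BorderedGram.
Variables (R : realType) (V : lmodType R) (ip : V -> V -> R).

Definition ipmx (l r : seq V) : 'M[R]_(size l, size r) :=
  \matrix_(i, j) ip (nth 0 l i) (nth 0 r j).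

Lemma std_ip_nil u v : std_ip ip u v [::] = ip u v.
Proof. by rewrite /std_ip det_mx11 mxE. Qed.

Lemma std_ipE u v s : std_ip ip u v s = \det (ipmx (u :: s) (v :: s)).
Proof.
rewrite /std_ip; congr (\det _); apply/matrixP => i j; rewrite !mxE.
by congr (ip _ _); apply: set_nth_default.
Qed.

Lemma ipmx_block1 u v s :
  ipmx (u :: s) (v :: s)
  = block_mx (ip u v)%:M (ipmx [:: u] s) (ipmx s [:: v]) (ipmx s s).
Proof.
rewrite -[LHS](@submxK _ 1 (size s) 1 (size s)).
by f_equal; apply/matrixP => i j; rewrite !mxE ?[i]ord1 ?[j]ord1.
Qed.

Lemma ipmx_block2 x y z s :
  ipmx [:: x, z & s] [:: y, z & s]
  = block_mx (ipmx [:: x; z] [:: y; z]) (ipmx [:: x; z] s)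
             (ipmx s [:: y; z]) (ipmx s s).
Proof.
rewrite -[LHS](@submxK _ 2 (size s) 2 (size s)).
f_equal; apply/matrixP => i j; rewrite !mxE //=.
- by case: i => [[|[|i]] ?]; case: j => [[|[|j]] ?].
- by case: i => [[|[|i]] ?].
- by case: j => [[|[|j]] ?].
Qed.

Lemma bordered_minor_ipmx x y z s i j :
  bordered_minor (ipmx [:: x; z] [:: y; z]) (ipmx [:: x; z] s)
                 (ipmx s [:: y; z]) (ipmx s s) i j
  = std_ip ip (nth 0 [:: x; z] i) (nth 0 [:: y; z] j) s.
Proof.
rewrite std_ipE [in RHS]ipmx_block1 /bordered_minor mxE.
congr (\det (block_mx _ _ _ _)).
all: by apply/matrixP => i' j'; rewrite !mxE ?[i']ord1 ?[j']ord1.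
Qed.

Lemma std_ip_sylvester x y z s :
  std_ip ip x y s * std_ip ip z z s - std_ip ip x z s * std_ip ip z y s
  = \det (ipmx s s) * std_ip ip x y (z :: s).
Proof.
rewrite (std_ipE x y (z :: s)) ipmx_block2.
have := det_sylvester2 (ipmx [:: x; z] [:: y; z]) (ipmx [:: x; z] s)
                       (ipmx s [:: y; z]) (ipmx s s).
by rewrite /= !bordered_minor_ipmx /= => ->.
Qed.

Lemma desc_listS (xs : nat -> V) k :
  desc_list xs k.+2 = xs k.+2 :: desc_list xs k.+1.
Proof.
rewrite /desc_list !subSS !subn0 -[k.+1]addn1 iotaD rev_cat /=.
by rewrite add2n addn1.
Qed.

Lemma E_factorS xs m :
  E_factor ip m.+3 xs
  = E_factor ip m.+2 xs ^+ 2 * std_ip ip (xs m.+2) (xs m.+2) (desc_list xs m.+1).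
Proof.
rewrite /E_factor big_nat_recr //= subSnn subnn expn0 expr1; congr (_ * _).
rewrite -prodrXl; apply: eq_big_nat => k /andP [_ lt_k_m2].
by rewrite -exprM -expnSr; congr (_ ^+ (2 ^ _)); lia.
Qed.

Lemma iter_star_std_ip xs m x y :
  iter_star ip xs m x y = E_factor ip m.+2 xs * std_ip ip x y (desc_list xs m.+2).
Proof.
elim: m x y => [|m IH] x y.
  have := std_ip_sylvester x y (xs 2) [::].
  by rewrite !std_ip_nil det_mx00 /E_factor big_geq // !mul1r => <-.
have gram_desc : \det (ipmx (desc_list xs m.+2) (desc_list xs m.+2))
                 = std_ip ip (xs m.+2) (xs m.+2) (desc_list xs m.+1).
  by rewrite desc_listS -std_ipE.
rewrite /= !IH E_factorS (desc_listS xs m.+1) -gram_desc.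
rewrite -[RHS]mulrA -std_ip_sylvester.
(* ring compares its atoms up to conversion, which is very slow on these. *)
move: (E_factor _ _ _) (desc_list _ _) (xs m.+3) => E s z.
ring.
Qed.

End BorderedGram.

Theorem theorem3p1 (R : realType) (V : lmodType R) (ip : V -> V -> R)
  (ip_sym : forall u v : V, ip u v = ip v u)
  (ip_linl : forall (a : R) (u v w : V), ip (a *: u + v) w = a * ip u w + ip v w)
  (ip_pos : forall u : V, u != 0 -> 0 < ip u u)
  (n : nat) (hn : (2 <= n)%N) (xs : nat -> V) (x y : V) :
  n_iter_star ip n xs x y
  = E_factor ip n xs * std_ip ip x y (desc_list xs n).
Proof.
case: n hn => [|[|m]] // _.
by rewrite /n_iter_star !subSS subn0 iter_star_std_ip.
Qed.
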